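(* Let $\mathbb{K}=(G,M,I)$ be a formal context and $\mathcal{R}$ a closure system on $G$ with $\mathcal{R}\subseteq\operatorname{Ext}(\mathbb{K})$. Let $$\hat{\mathcal{R}}=\bigvee_{A\in\mathcal{M}(\operatorname{Ext}(\mathbb{K}))\setminus\mathcal{M}(\mathcal{R})}\{A,G\},$$ the join taken in the lattice ${\downarrow}\operatorname{Ext}(\mathbb{K})$. Then $\hat{\mathcal{R}}$ is the inclusion-minimum closure system in ${\downarrow}\operatorname{Ext}(\mathbb{K})$ satisfying $\mathcal{R}\vee\hat{\mathcal{R}}=\operatorname{Ext}(\mathbb{K})$.
   Context: A formal context is a triple $(G,M,I)$ with finite nonempty sets $G$, $M$ and $I\subseteq G\times M$; derivations $A'=\{m\mid\forall a\in A:(a,m)\in I\}$, $B'=\{g\mid\forall b\in B:(g,b)\in I\}$; $\operatorname{Ext}(\mathbb{K})=\{A\subseteq G\mid A''=A\}$. A closure system on $G$ is a family of subsets of $G$ containing $G$ and closed under intersections. ${\downarrow}\operatorname{Ext}(\mathbb{K})$ is the lattice of all closure systems on $G$ contained in $\operatorname{Ext}(\mathbb{K})$, ordered by inclusion; its join of a family is the smallest closure system on $G$ containing the union (an empty join is $\{G\}$). For a closure system $\mathcal{C}$ viewed as a lattice under inclusion, $\mathcal{M}(\mathcal{C})$ denotes its set of meet-irreducible elements ($x\neq\top$ and $x=\bigwedge Y$ implies $x\in Y$). *)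

From mathcomp Require Import all_boot.
Set Implicit Arguments. Unset Strict Implicit. Unset Printing Implicit Defensive.

Section FCA.
Variables (G M : finType) (I : G -> M -> bool).

Definition derG (A : {set G}) : {set M} := [set m | [forall a in A, I a m]].
Definition derM (B : {set M}) : {set G} := [set g | [forall b in B, I g b]].

Definition Ext : {set {set G}} := [set A | derM (derG A) == A].
End FCA.

Section CS.
Variable G : finType.

Definition closure_system (F : {set {set G}}) : Prop :=
  setT \in F /\ forall S : {set {set G}}, S \subset F -> \bigcap_(A in S) A \in F.

(* join in the lattice of closure systems: the smallest closure system
   containing the given family (here: the union of the joined families) *)
Definition cs_join (F : {set {set G}}) : {set {set G}} :=
  \bigcap_(C : {set {set G}} | [&& setT \in C,
       [forall S : {set {set G}}, (S \subset C) ==> (\bigcap_(A in S) A \in C)]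
       & F \subset C]) C.

(* meet-irreducible elements of a closure system C viewed as a lattice under
   inclusion: top is G, meets are intersections (empty meet = G) *)
Definition meet_irr (C : {set {set G}}) (x : {set G}) : bool :=
  [&& x \in C, x != setT &
      [forall Y : {set {set G}}, (Y \subset C) ==> (x == \bigcap_(A in Y) A) ==> (x \in Y)]].

Definition Rhat (E R : {set {set G}}) : {set {set G}} :=
  cs_join (\bigcup_(A | meet_irr E A && ~~ meet_irr R A) [set A; setT]).
End CS.

(* Every element of a finite closure system E is an intersection of
   meet-irreducibles of E, and a meet-irreducible of E belonging to a join of
   families contained in E must already belong to one of them.  Hence a closure
   system C below Ext(K) satisfies R \/ C = Ext(K) exactly when C contains every
   meet-irreducible of Ext(K) outside R.  Since a meet-irreducible of Ext(K)
   lying in R is meet-irreducible in R, these are the A in M(Ext(K)) \ M(R),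
   and R-hat is by definition the least closure system containing them. *)
From mathcomp Require Import all_boot.
Set Implicit Arguments.
Unset Strict Implicit.
Unset Printing Implicit Defensive.

Section ClosureSystems.
Variable G : finType.
Implicit Types (X A : {set G}) (F C E R : {set {set G}}).

Lemma cs_join_closure_system F : closure_system (cs_join F).
Proof.
split; first by apply/bigcapP => C /and3P [].
move=> S SF; apply/bigcapP => C PC; have /and3P [_ /forallP closedC _] := PC.
apply: (implyP (closedC S)); apply: subset_trans SF _.
by apply/subsetP => X /bigcapP; apply.
Qed.

Lemma cs_join_min F C : closure_system C -> F \subset C -> cs_join F \subset C.
Proof.
move=> [CT closedC] FC; apply: bigcap_inf; apply/and3P; split => //.
by apply/forallP => S; apply/implyP => /closedC.
Qed.

Lemma sub_cs_join F : F \subset cs_join F.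
Proof. by apply/subsetP => X XF; apply/bigcapP => C /and3P [_ _ /subsetP]; apply. Qed.

Definition uppers F X : {set {set G}} := [set B in F | X \subset B].

Lemma sub_bigcap_uppers F X : X \subset \bigcap_(B in uppers F X) B.
Proof. by apply/bigcapsP => B; rewrite inE => /andP []. Qed.

(* The sets equal to the intersection of their upper bounds in F form a closure
   system containing F. *)
Lemma cs_join_bigcap_uppers F A :
  A \in cs_join F -> A = \bigcap_(B in uppers F A) B.
Proof.
pose D := [set X | X == \bigcap_(B in uppers F X) B].
have csD : closure_system D.
  split; first by rewrite inE eqEsubset subsetT sub_bigcap_uppers.
  move=> S SD; rewrite inE eqEsubset sub_bigcap_uppers /=.
  apply/bigcapsP => X XS.
  have /[!inE] /eqP -> := subsetP SD X XS.
  apply/bigcapsP => B /[!inE] /andP [BF XB]; apply: bigcap_inf.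
  by rewrite inE BF (subset_trans (bigcap_inf _ XS) XB).
have FD : F \subset D.
  apply/subsetP => B BF; rewrite inE eqEsubset sub_bigcap_uppers /=.
  by apply: bigcap_inf; rewrite inE BF subxx.
by move=> /(subsetP (cs_join_min csD FD)) /[!inE] /eqP.
Qed.

(* Induction on the size of the complement: a reducible X is the intersection
   of a family of strictly larger members of E. *)
Lemma meet_irr_sub_closure_system E C :
  closure_system C -> {subset meet_irr E <= C} -> E \subset C.
Proof.
move=> [CT closedC] irrC.
suff /(_ _ _ erefl) inC : forall n X, #|~: X| = n -> X \in E -> X \in C.
  by apply/subsetP.
elim/ltn_ind => n IH X cardX XE.
have [/irrC // | ] := boolP (meet_irr E X).
rewrite /meet_irr XE /=; have [-> // | _ /=] := eqVneq X setT.
case/forallPn => Y; rewrite !negb_imply => /and3P [YE /eqP XY XnY].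
rewrite XY; apply: closedC; apply/subsetP => Z ZY.
have XZ : X \proper Z.
  rewrite properEneq XY bigcap_inf // andbT.
  by apply: contraNneq XnY => ZE; rewrite XY ZE.
apply: (IH _ _ Z erefl (subsetP YE Z ZY)).
by rewrite -cardX proper_card // properC.
Qed.

Lemma meet_irr_cs_join E F A :
  F \subset E -> meet_irr E A -> A \in cs_join F -> A \in F.
Proof.
move=> FE /and3P [_ _ /forallP irrA] /cs_join_bigcap_uppers AE.
have uppersE : uppers F A \subset E.
  by apply: subset_trans FE; apply/subsetP => B /[!inE] /andP [].
by move: (irrA (uppers F A)); rewrite uppersE -AE eqxx /= inE => /andP [].
Qed.

Lemma meet_irr_subfamily E R A :
  R \subset E -> meet_irr E A -> A \in R -> meet_irr R A.
Proof.
move=> RE /and3P [_ AnT /forallP irrA] AR; rewrite /meet_irr AR AnT /=.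
apply/forallP => Y; apply/implyP => YR; apply: (implyP (irrA Y)).
exact: subset_trans RE.
Qed.

Lemma mem_Rhat E R A : meet_irr E A -> ~~ meet_irr R A -> A \in Rhat E R.
Proof.
move=> AE AnR; apply: (subsetP (sub_cs_join _)).
by apply/bigcupP; exists A; rewrite ?AE ?AnR // !inE eqxx.
Qed.

Lemma Rhat_min E R C : closure_system C ->
  (forall A, meet_irr E A -> ~~ meet_irr R A -> A \in C) -> Rhat E R \subset C.
Proof.
move=> csC irrC; apply: cs_join_min => //; apply/bigcupsP => A /andP [AE AnR].
by apply/subsetP => X /[!inE] /orP [] /eqP ->; [apply: irrC | case: csC].
Qed.

Lemma Rhat_sub E R : closure_system E -> Rhat E R \subset E.
Proof. by move=> csE; apply: Rhat_min => // A /and3P []. Qed.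

Lemma cs_join_Rhat E R : closure_system E -> R \subset E ->
  cs_join (R :|: Rhat E R) = E.
Proof.
move=> csE RE; apply/eqP; rewrite eqEsubset.
rewrite cs_join_min ?subUset ?RE ?Rhat_sub //=.
apply: meet_irr_sub_closure_system; first exact: cs_join_closure_system.
move=> A AE; apply: (subsetP (sub_cs_join _)); rewrite inE.
have [/and3P [-> _ _] // | AnR] := boolP (meet_irr R A).
by rewrite mem_Rhat ?orbT.
Qed.

Lemma Rhat_minimal E R C : R \subset E -> closure_system C -> C \subset E ->
  cs_join (R :|: C) = E -> Rhat E R \subset C.
Proof.
move=> RE csC CE joinE; apply: Rhat_min => // A AE AnR.
have /[!inE] /orP [AR | //] : A \in R :|: C.
  apply: (meet_irr_cs_join _ AE); first by rewrite subUset RE.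
  by rewrite joinE; case/and3P: AE.
by rewrite (meet_irr_subfamily RE AE AR) in AnR.
Qed.

End ClosureSystems.

Section Derivations.
Variables (G M : finType) (I : G -> M -> bool).

Lemma sub_derMG (X : {set G}) : X \subset derM I (derG I X).
Proof.
apply/subsetP => g gX; rewrite inE; apply/forall_inP => m.
by rewrite inE => /forall_inP; apply.
Qed.

Lemma derMG_mono (X Y : {set G}) :
  X \subset Y -> derM I (derG I X) \subset derM I (derG I Y).
Proof.
move=> XY; apply/subsetP => g /[!inE] /forall_inP gI.
apply/forall_inP => m /[!inE] /forall_inP mY; apply: gI.
by rewrite inE; apply/forall_inP => a /(subsetP XY); apply: mY.
Qed.

Lemma Ext_closure_system : closure_system (Ext I).
Proof.
split; first by rewrite inE eqEsubset subsetT sub_derMG.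
move=> S SE; rewrite inE eqEsubset sub_derMG andbT.
apply/bigcapsP => X XS.
have /[!inE] /eqP <- := subsetP SE X XS.
exact/derMG_mono/bigcap_inf.
Qed.

End Derivations.

Theorem lemma2 (G M : finType) (I : G -> M -> bool)
  (hG : 0 < #|G|) (hM : 0 < #|M|) (R : {set {set G}}) :
  closure_system R -> R \subset Ext I ->
  [/\ closure_system (Rhat (Ext I) R),
      Rhat (Ext I) R \subset Ext I,
      cs_join (R :|: Rhat (Ext I) R) = Ext I &
      forall C : {set {set G}}, closure_system C -> C \subset Ext I ->
        cs_join (R :|: C) = Ext I -> Rhat (Ext I) R \subset C].
Proof.
move=> _ RE; have csE := Ext_closure_system I.
split; first exact: cs_join_closure_system.
- exact: Rhat_sub.
- exact: cs_join_Rhat.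
- by move=> C; apply: Rhat_minimal.
Qed.
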